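(* Let $s\in\{0,\tfrac12\}$, $\lambda\in\mathbb{C}$, and let $\sigma\in\mathrm{Aut}(\mathfrak{L}^s_\lambda)$ be normalized, i.e. there are $\epsilon\in\{1,-1\}$, $\alpha,\mu\in\mathbb{C}\setminus\{0\}$, $\beta\in\mathbb{C}$ with $\sigma(L_m)=\epsilon\alpha^mL_{\epsilon m}+m\alpha^m\beta I_{\epsilon m}$ and $\sigma(I_m)=\alpha^m\mu I_{\epsilon m}$ for all $m\in\mathbb{Z}$. Then for every $p\in s+\mathbb{Z}$ there is $h_p\in\mathbb{C}$ with $\sigma(H_p)=h_pH_{\epsilon p}$.
   Context: For $s\in\{0,\tfrac12\}$ and $\lambda\in\mathbb{C}$, $\mathfrak{L}^s_\lambda$ is the complex Lie superalgebra with basis $\{L_m,I_m,G_p,H_p : m\in\mathbb{Z},\ p\in s+\mathbb{Z}\}$, even part spanned by the $L_m,I_m$, odd part spanned by the $G_p,H_p$, with brackets $[L_m,L_n]=(m-n)L_{m+n}$, $[L_m,I_n]=(m-n)I_{m+n}$, $[L_m,H_p]=(\tfrac m2-p)H_{m+p}$, $[L_m,G_p]=(\tfrac m2-p)G_{m+p}+\lambda(m+1)H_{m+p}$, $[I_m,G_p]=(m-2p)H_{m+p}$, $[G_p,G_q]=I_{p+q}$, plus super-antisymmetry; all other brackets of basis elements are zero. $\mathrm{Aut}(\mathfrak{L})$ is the group of bijective parity-preserving linear maps $\sigma$ with $\sigma([x,y])=[\sigma(x),\sigma(y)]$. *)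

From HB Require Import structures.
From mathcomp Require Import all_boot all_order all_algebra.
Set Implicit Arguments. Unset Strict Implicit. Unset Printing Implicit Defensive.
Import Order.TTheory GRing.Theory Num.Theory.
Local Open Scope ring_scope.

(* Basis of L^s_lambda.  [bG k] stands for G_{k+s}, [bH k] for H_{k+s},
   where s = 1/2 if the boolean [hs] is true and s = 0 otherwise. *)
Inductive B := bL of int | bI of int | bG of int | bH of int.

Definition B_enc (b : B) : nat * int :=
  match b with bL m => (0%N, m) | bI m => (1%N, m) | bG m => (2%N, m) | bH m => (3%N, m) end.
Definition B_dec (x : nat * int) : option B :=
  match x with
  | (0%N, m) => Some (bL m) | (1%N, m) => Some (bI m)
  | (2%N, m) => Some (bG m) | (3%N, m) => Some (bH m) | _ => None end.
Lemma B_encK : pcancel B_enc B_dec. Proof. by case. Qed.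
HB.instance Definition _ := Equality.copy B (pcan_type B_encK).

Definition oddB (b : B) : bool := match b with bG _ | bH _ => true | _ => false end.

Section Alg.
Variable F : fieldType.

(* elements of the superalgebra: finite formal linear combinations of basis
   elements; two combinations are equal iff all coefficients agree *)
Definition vec := seq (F * B).
Definition coef (v : vec) (b : B) : F := \sum_(x <- v | x.2 == b) x.1.
Definition veq (v w : vec) : Prop := forall b, coef v b = coef w b.
Definition scalev (a : F) (v : vec) : vec := [seq (a * y.1, y.2) | y <- v].

Definition ext (f : B -> vec) (v : vec) : vec :=
  flatten [seq scalev x.1 (f x.2) | x <- v].

Variables (hs : bool) (lam : F).

Definition pval (k : int) : F := k%:~R + (if hs then 2^-1 else 0).
Definition ms (m : int) : F := m%:~R.

Definition br (b b' : B) : vec :=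
  match b, b' with
  | bL m, bL n => [:: (ms (m - n), bL (m + n))]
  | bL m, bI n => [:: (ms (m - n), bI (m + n))]
  | bI n, bL m => [:: (- ms (m - n), bI (m + n))]
  | bL m, bH k => [:: (ms m / 2 - pval k, bH (m + k))]
  | bH k, bL m => [:: (- (ms m / 2 - pval k), bH (m + k))]
  | bL m, bG k => [:: (ms m / 2 - pval k, bG (m + k));
                     (lam * ms (m + 1), bH (m + k))]
  | bG k, bL m => [:: (- (ms m / 2 - pval k), bG (m + k));
                     (- (lam * ms (m + 1)), bH (m + k))]
  | bI m, bG k => [:: (ms m - 2 * pval k, bH (m + k))]
  | bG k, bI m => [:: (- (ms m - 2 * pval k), bH (m + k))]
  | bG k, bG k' => [:: (1, bI (k + k' + (hs : nat)%:Z))]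
  | _, _ => [::]
  end.

Definition brv (v w : vec) : vec :=
  flatten [seq scalev (x.1 * y.1) (br x.2 y.2) | x <- v, y <- w].

(* sigma (given by its values on the basis) is an automorphism of L^s_lambda:
   parity preserving, bijective (as a linear map) and a homomorphism *)
Definition is_aut (sigma : B -> vec) : Prop :=
  [/\ (forall b b', coef (sigma b) b' != 0 -> oddB b' = oddB b),
      (forall v, (forall b, coef (ext sigma v) b = 0) -> forall b, coef v b = 0),
      (forall w, exists v, veq (ext sigma v) w)
    & (forall b b', veq (ext sigma (br b b')) (brv (sigma b) (sigma b')))].

End Alg.

Definition epsF (F : fieldType) (eps : bool) : F := if eps then 1 else -1.
Definition epsI (eps : bool) (m : int) : int := if eps then m else - m.
(* index k' with eps*(k+s) = k'+s *)
Definition epsO (hs eps : bool) (k : int) : int := if eps then k else - k - (hs : nat)%:Z.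

From HB Require Import structures.
From mathcomp Require Import all_boot all_order all_algebra.
From mathcomp Require Import ring zify.
Import Order.TTheory GRing.Theory Num.Theory.
Local Open Scope ring_scope.
Set Implicit Arguments. Unset Strict Implicit.

(* Write S = sigma(H_k).  Parity kills the even coefficients of S.  Applying
   sigma to [I_m', H_k] = 0 gives [I_m, S] = 0 with m = eps m'; since
   [I_m, G_q] = (m - 2(q+s)) H_(m+q) and H_(m+q) occurs in no other bracket
   [I_m, _], choosing m = 2(q+s) + 1 kills the G_q-coefficient of S.
   Finally sigma(L_0) = eps L_0, so [L_0, H_k] = -(k+s) H_k makes S an
   eigenvector of ad L_0 for -eps(k+s), while ad L_0 acts on H_q by -(q+s);
   in characteristic 0 only the H_q with q+s = eps(k+s) survive. *)

Section LinearForms.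
Variable F : fieldType.
Implicit Types (v w : vec F) (f : B -> F).

Definition lform f v : F := \sum_(x <- v) x.1 * f x.2.

Lemma lform_nil f : lform f [::] = 0.
Proof. by rewrite /lform big_nil. Qed.

Lemma lform_cons f a c v : lform f ((a, c) :: v) = a * f c + lform f v.
Proof. by rewrite /lform big_cons. Qed.

Lemma lform_on (U : seq B) f v : uniq U -> {subset map snd v <= U} ->
  lform f v = \sum_(c <- U) coef v c * f c.
Proof.
move=> uU vU; rewrite /lform /coef.
under [RHS]eq_bigr => c _ do rewrite mulr_suml.
rewrite (exchange_big_dep predT) //=; apply: eq_big_seq => x xv.
have xU : x.2 \in U by apply/vU/map_f.
rewrite big_mkcond (bigD1_seq x.2) //= eqxx big1 ?addr0 // => c.
by rewrite eq_sym => /negPf ->.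
Qed.

Lemma lform_veq f v w : veq v w -> lform f v = lform f w.
Proof.
move=> vw; rewrite !(@lform_on (undup (map snd (v ++ w)))) ?undup_uniq //.
- by apply: eq_bigr => c _; rewrite vw.
- by move=> c cw; rewrite mem_undup map_cat mem_cat cw orbT.
- by move=> c cv; rewrite mem_undup map_cat mem_cat cv.
Qed.

Lemma eq_lform f g v : f =1 g -> lform f v = lform g v.
Proof. by move=> fg; apply: eq_bigr => x _; rewrite fg. Qed.

Lemma lformD f g v : lform (fun d => f d + g d) v = lform f v + lform g v.
Proof. by rewrite /lform -big_split; apply: eq_bigr => x _; rewrite mulrDr. Qed.

Lemma lform_delta c a v : lform (fun d => if d == c then a else 0) v = coef v c * a.
Proof.
rewrite /lform /coef mulr_suml [RHS]big_mkcond; apply: eq_bigr => x _.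
by case: (x.2 == c); rewrite ?mulr0.
Qed.

Lemma coef_nil b : coef ([::] : vec F) b = 0.
Proof. by rewrite /coef big_nil. Qed.

Lemma coef_cons (a : F) c v b :
  coef ((a, c) :: v) b = (if c == b then a else 0) + coef v b.
Proof. by rewrite /coef big_cons; case: (c == b); rewrite ?add0r. Qed.

Lemma coef_seq1 (a : F) c b : coef [:: (a, c)] b = if c == b then a else 0.
Proof. by rewrite /coef big_cons big_nil /=; case: (c == b); rewrite ?addr0. Qed.

Lemma coef_flatten (l : seq (vec F)) b : coef (flatten l) b = \sum_(u <- l) coef u b.
Proof. by rewrite /coef big_flatten. Qed.

Lemma coef_scalev a v b : coef (scalev a v) b = a * coef v b.
Proof. by rewrite /coef /scalev big_map mulr_sumr. Qed.

Lemma coef_ext (s : B -> vec F) v b :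
  coef (ext s v) b = lform (fun c => coef (s c) b) v.
Proof.
by rewrite /ext coef_flatten big_map; apply: eq_bigr => x _; rewrite coef_scalev.
Qed.

Lemma coef_brv hs lam v w b : coef (brv hs lam v w) b =
  lform (fun c => lform (fun d => coef (br hs lam c d) b) w) v.
Proof.
rewrite /brv coef_flatten big_allpairs_dep; apply: eq_bigr => x _.
rewrite mulr_sumr; apply: eq_bigr => y _.
by rewrite coef_scalev mulrA.
Qed.

End LinearForms.

Lemma eq_bH (a b : int) : (bH a == bH b) = (a == b). Proof. by []. Qed.
Lemma eq_bG (a b : int) : (bG a == bG b) = (a == b). Proof. by []. Qed.

Lemma addr_eq_subr (m k n : int) : (m + k == n) = (k == n - m).
Proof. by apply/eqP/eqP; lia. Qed.

Section BracketTable.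
Variables (F : fieldType) (hs : bool) (lam : F).

Lemma coef_br_IH m n d : coef (br hs lam (bI m) d) (bH n) =
  if d == bG (n - m) then ms F m - 2 * pval F hs (n - m) else 0.
Proof.
case: d => k; rewrite /= ?coef_seq1 ?coef_nil //.
by rewrite eq_bH eq_bG addr_eq_subr; case: eqP => // ->.
Qed.

Lemma coef_br_LH m n d : coef (br hs lam (bL m) d) (bH n) =
  (if d == bH (n - m) then ms F m / 2 - pval F hs (n - m) else 0) +
  (if d == bG (n - m) then lam * ms F (m + 1) else 0).
Proof.
case: d => k; rewrite /= ?coef_seq1 ?coef_cons ?coef_nil ?addr0 ?add0r //.
- by rewrite eq_bH eq_bG addr_eq_subr.
- by rewrite !eq_bH addr_eq_subr; case: eqP => // ->.
Qed.

End BracketTable.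

Section CharZero.
Variables (F : fieldType) (charF0 : [pchar F] =i pred0).

Lemma pchar0_intr_eq0 (z : int) : (z%:~R == 0 :> F) = (z == 0).
Proof.
case: z => n; first by rewrite /= (pcharf0P F).1.
by rewrite NegzE mulrNz oppr_eq0 /= (pcharf0P F).1.
Qed.

Lemma two_pval (hs : bool) k : 2 * pval F hs k = (2 * k + (hs : nat)%:Z)%:~R.
Proof.
have two0 : (2 : F) != 0 by rewrite (pcharf0P F).1.
by rewrite /pval intrD intrM; case: hs => /=; field.
Qed.

Lemma ms_sub_two_pval (hs : bool) q :
  ms F (2 * q + (hs : nat)%:Z + 1) - 2 * pval F hs q = 1.
Proof. by rewrite two_pval /ms -intrB addrAC subrr add0r. Qed.

Lemma pval_eps_neq hs eps k q :
  q != epsO hs eps k -> epsF F eps * pval F hs q != pval F hs k.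
Proof.
move=> qk; rewrite -subr_eq0.
suff : 2 * (epsF F eps * pval F hs q - pval F hs k) != 0.
  by apply: contraNneq => ->; rewrite mulr0.
rewrite mulrBr mulrCA !two_pval /epsF.
case: eps qk => /= qk; rewrite ?mul1r ?mulN1r -!intrN -intrD pchar0_intr_eq0.
all: by move: qk; case: hs => /=; lia.
Qed.

End CharZero.

Lemma epsIK eps : involutive (epsI eps).
Proof. by case: eps => m; rewrite /= ?opprK. Qed.

Lemma epsI0 eps : epsI eps 0 = 0.
Proof. by case: eps; rewrite /= ?oppr0. Qed.

Section NormalizedAutomorphism.
Variables (F : fieldType) (hs : bool) (lam : F) (sigma : B -> vec F).
Variables (eps : bool) (alpha mu beta : F).
Hypotheses (charF0 : [pchar F] =i pred0) (alpha0 : alpha != 0) (mu0 : mu != 0).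
Hypothesis sigma_br : forall b b',
  veq (ext sigma (br hs lam b b')) (brv hs lam (sigma b) (sigma b')).
Hypothesis sigmaL : forall m : int, veq (sigma (bL m))
  [:: (epsF F eps * alpha ^ m, bL (epsI eps m));
      (m%:~R * alpha ^ m * beta, bI (epsI eps m))].
Hypothesis sigmaI : forall m : int,
  veq (sigma (bI m)) [:: (alpha ^ m * mu, bI (epsI eps m))].

Lemma coef_sigma_bH_bG k q : coef (sigma (bH k)) (bG q) = 0.
Proof.
set m := 2 * q + (hs : nat)%:Z + 1.
have := sigma_br (bI (epsI eps m)) (bH k) (bH (m + q)).
rewrite /= coef_nil coef_brv (lform_veq _ (sigmaI _)).
rewrite lform_cons lform_nil addr0 epsIK.
rewrite (eq_lform _ (coef_br_IH _ _ _ _)) lform_delta (addrC m) addrK.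
rewrite (ms_sub_two_pval charF0) mulr1 => /esym/eqP.
by rewrite !mulf_eq0 (negbTE mu0) (negbTE (expfz_neq0 _ alpha0)) => /eqP.
Qed.

Lemma coef_sigma_bH_bH k q : q != epsO hs eps k -> coef (sigma (bH k)) (bH q) = 0.
Proof.
move=> qk; have := sigma_br (bL 0) (bH k) (bH q).
rewrite /= coef_ext lform_cons lform_nil addr0 add0r.
rewrite coef_brv (lform_veq _ (sigmaL 0)).
rewrite !lform_cons lform_nil mul0r mulr0z !mul0r addr0 expr0z mulr1 epsI0.
rewrite (eq_lform _ (coef_br_LH _ _ _ _)) lformD !lform_delta coef_sigma_bH_bG subr0.
rewrite /ms mulr0z !mul0r !addr0 !sub0r; set c := coef _ _ => Hc.
have : c * (epsF F eps * pval F hs q - pval F hs k) = 0.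
  by rewrite -[RHS](subrr (- pval F hs k * c)) {2}Hc; ring.
move/eqP; rewrite mulf_eq0 subr_eq0.
by rewrite (negbTE (pval_eps_neq charF0 qk)) orbF => /eqP.
Qed.

End NormalizedAutomorphism.

Theorem lemma3p4 (F : closedFieldType) (charF0 : [pchar F] =i pred0)
  (hs : bool) (lam : F) (sigma : B -> vec F)
  (eps : bool) (alpha mu beta : F) (alpha0 : alpha != 0) (mu0 : mu != 0) :
  is_aut hs lam sigma ->
  (forall m : int, veq (sigma (bL m))
      [:: (epsF F eps * alpha ^ m, bL (epsI eps m));
          (m%:~R * alpha ^ m * beta, bI (epsI eps m))]) ->
  (forall m : int, veq (sigma (bI m)) [:: (alpha ^ m * mu, bI (epsI eps m))]) ->
  forall k : int, exists h : F, veq (sigma (bH k)) [:: (h, bH (epsO hs eps k))].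
Proof.
case=> sigma_odd _ _ sigma_br sigmaL sigmaI k.
exists (coef (sigma (bH k)) (bH (epsO hs eps k))) => b.
rewrite coef_seq1; case: eqP => [<- // | neq_b].
case: b neq_b => q neq_q.
- by apply/eqP/contraT => /sigma_odd.
- by apply/eqP/contraT => /sigma_odd.
- exact: (coef_sigma_bH_bG charF0 alpha0 mu0 sigma_br sigmaI).
apply: (coef_sigma_bH_bH charF0 alpha0 mu0 sigma_br sigmaL sigmaI).
by apply/eqP => eq_q; apply: neq_q; rewrite eq_q.
Qed.
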